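(* Consider the type with a single binary operation $\cdot$, let $\mathcal{LZ}$ be the variety of left-zero semigroups (defined by $x\cdot y=x$), and let $X=\{x,y\}$ be a two-element set. Then the free $\mathcal{LZ}^p$-algebra over $X$ is not a semigroup; specifically, $x\cdot(y\cdot x)\neq(x\cdot y)\cdot x$ in it.
   Context: In the type with one binary operation, $T_m$ is the set of terms in $x_1,\dots,x_m$ in which all $m$ variables occur. Prolongation: for an identity $\sigma$ of the form $u(y_1,\dots,y_n)=v(y_1,\dots,y_n)$ and $m\ge1$, $\sigma^p_m$ is the set of identities $u(r_1,\dots,r_n)=v(r_1,\dots,r_n)$ obtained by substituting $r_i(x_1,\dots,x_m)$ for $y_i$, with $r_i$ ranging over $T_m$; $\sigma^p=\bigcup_m\sigma^p_m$; $\Sigma^p=\bigcup_{\sigma\in\Sigma}\sigma^p$. For a variety $\mathcal{V}$, $\mathcal{V}^p$ is the variety defined by $\mathrm{Id}(\mathcal{V})^p$, where $\mathrm{Id}(\mathcal{V})$ is the set of all identities holding in $\mathcal{V}$. *)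

From Stdlib Require Import Arith.

Inductive term : Type :=
| Var : nat -> term
| Op : term -> term -> term.

Record algebra : Type := Algebra { carrier :> Type; op : carrier -> carrier -> carrier }.

Fixpoint eval (A : algebra) (e : nat -> A) (t : term) : A :=
  match t with
  | Var n => e n
  | Op t1 t2 => op A (eval A e t1) (eval A e t2)
  end.

Definition identity := (term * term)%type.

Definition satisfies (A : algebra) (s : identity) : Prop :=
  forall e : nat -> A, eval A e (fst s) = eval A e (snd s).

Definition models (A : algebra) (Sigma : identity -> Prop) : Prop :=
  forall s, Sigma s -> satisfies A s.

(* Id(V) for V the variety defined by Sigma: all identities holding in V. *)
Definition Id_of (Sigma : identity -> Prop) (s : identity) : Prop :=
  forall A : algebra, models A Sigma -> satisfies A s.

Fixpoint occurs (i : nat) (t : term) : Prop :=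
  match t with
  | Var n => n = i
  | Op t1 t2 => occurs i t1 \/ occurs i t2
  end.

Definition in_T (m : nat) (t : term) : Prop :=
  (forall i, occurs i t -> i < m) /\ (forall i, i < m -> occurs i t).

Fixpoint subst (s : nat -> term) (t : term) : term :=
  match t with
  | Var n => s n
  | Op t1 t2 => Op (subst s t1) (subst s t2)
  end.

Definition prolong_m (m : nat) (sigma tau : identity) : Prop :=
  exists s : nat -> term,
    (forall i, occurs i (fst sigma) \/ occurs i (snd sigma) -> in_T m (s i)) /\
    tau = (subst s (fst sigma), subst s (snd sigma)).

Definition prolong (Sigma : identity -> Prop) (tau : identity) : Prop :=
  exists sigma m, Sigma sigma /\ 1 <= m /\ prolong_m m sigma tau.

(* V^p is the variety defined by Id(V)^p. *)
Definition prolong_variety (Sigma : identity -> Prop) : identity -> Prop :=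
  prolong (Id_of Sigma).

Definition LZ_ax (s : identity) : Prop := s = (Op (Var 0) (Var 1), Var 0).

Definition LZp_ax : identity -> Prop := prolong_variety LZ_ax.

(* The free algebra of the variety defined by Sigma over X = {x, y}
   (x = Var 0, y = Var 1) is T(X) modulo the relation below:
   two terms over X are equal in it iff the identity holds in the variety. *)
Definition over_X (t : term) : Prop := forall i, occurs i t -> i < 2.

Definition free_eq (Sigma : identity -> Prop) (t1 t2 : term) : Prop :=
  Id_of Sigma (t1, t2).

Definition vx : term := Var 0.
Definition vy : term := Var 1.

(* Counter-model: on terms, let a.b be a when a and b contain the same variables, and the
   formal product otherwise.  In a prolonged identity u(r_1,...,r_n) = v(r_1,...,r_n) all r_i
   contain the same variables, so both sides evaluate to the value of the leftmost r_i; an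
   identity of left-zero semigroups keeps its leftmost variable, so the model satisfies LZ^p.
   But x.(y.x) and (x.y).x are distinct formal products there. *)
From Stdlib Require Import Arith.
From Stdlib Require Import ClassicalEpsilon Lia.

Definition same_vars (a b : term) : Prop := forall i, occurs i a <-> occurs i b.

Lemma same_vars_sym a b : same_vars a b -> same_vars b a.
Proof. intros h i; specialize (h i); tauto. Qed.

Lemma same_vars_trans a b c : same_vars a b -> same_vars b c -> same_vars a c.
Proof. intros h1 h2 i; rewrite (h1 i); apply h2. Qed.

Lemma in_T_same_vars m a b : in_T m a -> in_T m b -> same_vars a b.
Proof. intros [Ha1 Ha2] [Hb1 Hb2] i; split; auto. Qed.

Fixpoint leftmost_var (t : term) : nat :=
  match t with Var n => n | Op a _ => leftmost_var a end.

Lemma occurs_leftmost_var t : occurs (leftmost_var t) t.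
Proof. induction t; simpl; auto. Qed.

Lemma eval_subst (A : algebra) e s t :
  eval A e (subst s t) = eval A (fun i => eval A e (s i)) t.
Proof. induction t; simpl; congruence. Qed.

Definition LZ_nat : algebra := Algebra nat (fun a _ => a).

Lemma eval_LZ_nat t : eval LZ_nat (fun n => n) t = leftmost_var t.
Proof. induction t; simpl; auto. Qed.

Lemma Id_LZ_leftmost_var u v : Id_of LZ_ax (u, v) -> leftmost_var u = leftmost_var v.
Proof.
  intros H.
  assert (Hm : models LZ_nat LZ_ax) by (intros s -> e; reflexivity).
  specialize (H LZ_nat Hm (fun n => n)); simpl in H.
  now rewrite !eval_LZ_nat in H.
Qed.

Definition LZp_op (a b : term) : term :=
  if excluded_middle_informative (same_vars a b) then a else Op a b.

Definition LZp_model : algebra := Algebra term LZp_op.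

Lemma occurs_LZp_op a b i : occurs i (LZp_op a b) <-> occurs i a \/ occurs i b.
Proof.
  unfold LZp_op; destruct excluded_middle_informative as [h|h]; simpl.
  - specialize (h i); tauto.
  - tauto.
Qed.

Lemma occurs_eval_LZp (e : nat -> term) t i :
  occurs i (eval LZp_model e t) <-> exists j, occurs j t /\ occurs i (e j).
Proof.
  induction t as [n|a IHa b IHb]; simpl.
  - split; [intros h; exists n; auto | intros [j [-> h]]; auto].
  - change (occurs i (LZp_op (eval LZp_model e a) (eval LZp_model e b)) <->
            exists j, (occurs j a \/ occurs j b) /\ occurs i (e j)).
    rewrite occurs_LZp_op, IHa, IHb; firstorder.
Qed.

Lemma eval_LZp_same_vars (e : nat -> term) a b :
  same_vars a b -> same_vars (eval LZp_model e a) (eval LZp_model e b).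
Proof.
  intros h i; rewrite !occurs_eval_LZp.
  split; intros [j [hj hi]]; exists j; split; auto; apply h; auto.
Qed.

Lemma eval_LZp_leftmost (e : nat -> term) s t :
  (forall j, occurs j t -> same_vars (e j) s) ->
  same_vars (eval LZp_model e t) s /\ eval LZp_model e t = e (leftmost_var t).
Proof.
  induction t as [n|a IHa b IHb]; simpl; intros H; [split; auto|].
  destruct IHa as [Ha Ea]; [intros; apply H; auto|].
  destruct IHb as [Hb Eb]; [intros; apply H; auto|].
  change (same_vars (LZp_op (eval LZp_model e a) (eval LZp_model e b)) s /\
          LZp_op (eval LZp_model e a) (eval LZp_model e b) = e (leftmost_var a)).
  unfold LZp_op; destruct excluded_middle_informative as [h|h]; [auto|].
  exfalso; apply h, (same_vars_trans _ s); [exact Ha | apply same_vars_sym, Hb].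
Qed.

Lemma LZp_model_models : models LZp_model LZp_ax.
Proof.
  intros tau [[u v] [m [Hid [_ [s [Hs ->]]]]]] e; simpl in *.
  rewrite !eval_subst.
  set (f := fun i => eval LZp_model e (s i)).
  assert (Hf : forall j, occurs j u \/ occurs j v -> same_vars (f j) (f (leftmost_var u))).
  { intros j hj; apply eval_LZp_same_vars, (in_T_same_vars m); apply Hs; auto.
    left; apply occurs_leftmost_var. }
  destruct (eval_LZp_leftmost f (f (leftmost_var u)) u) as [_ ->]; [auto|].
  destruct (eval_LZp_leftmost f (f (leftmost_var u)) v) as [_ ->]; [auto|].
  now rewrite (Id_LZ_leftmost_var _ _ Hid).
Qed.

Lemma LZp_free_not_assoc_xyx : ~ free_eq LZp_ax (Op vx (Op vy vx)) (Op (Op vx vy) vx).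
Proof.
  intros H; specialize (H LZp_model LZp_model_models Var); simpl in H.
  change (LZp_op vx (LZp_op vy vx) = LZp_op (LZp_op vx vy) vx) in H.
  assert (Hxy : ~ same_vars vx vy) by (intros h; discriminate (proj1 (h 0) eq_refl)).
  assert (Hyx : ~ same_vars vy vx) by (intros h; discriminate (proj1 (h 1) eq_refl)).
  unfold LZp_op in H.
  repeat destruct excluded_middle_informative; try contradiction; discriminate.
Qed.

Theorem corollary4p12 :
  (~ (forall a b c : term, over_X a -> over_X b -> over_X c ->
        free_eq LZp_ax (Op a (Op b c)) (Op (Op a b) c))) /\
  ~ free_eq LZp_ax (Op vx (Op vy vx)) (Op (Op vx vy) vx).
Proof.
  split; [|exact LZp_free_not_assoc_xyx].
  intros Hassoc; apply LZp_free_not_assoc_xyx, Hassoc;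
    unfold over_X, vx, vy; simpl; intros; lia.
Qed.
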